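(* Let $V$ be a complex vector space of dimension $k\ge2$, with basis $e_1,\dots,e_k$ and dual basis $\alpha_1,\dots,\alpha_k$. Let $$T_k=\sum_{1\le i<j\le k}\big(\alpha_i\otimes\alpha_j-\alpha_j\otimes\alpha_i\big)\otimes(e_i\wedge e_j)\in V^*\otimes V^*\otimes\Lambda^2V.$$ Then $$\underline{R}(T_k)\ge\left\lceil\frac{k^2}{2}\right\rceil=\binom{k}{2}+\left\lceil\frac{k}{2}\right\rceil.$$
   Context: The border rank $\underline{R}(T)$ is the smallest $r$ such that $T$ is a limit of sums of $r$ rank-one tensors $a\otimes b\otimes c$. *)

(* complex numbers are R[i] = complex R for R : realType
   (any realType is a model of the reals, so R[i] is a model of C). *)
From HB Require Import structures.
From mathcomp Require Import all_boot all_order all_algebra.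
From mathcomp Require Import reals.
From mathcomp Require Export complex.
Set Implicit Arguments. Unset Strict Implicit. Unset Printing Implicit Defensive.
Import Order.TTheory GRing.Theory Num.Theory.
Local Open Scope ring_scope.

(* Index type of the basis e_i /\ e_j (i < j) of Lambda^2 V, dim V = k. *)
Definition wedge2_idx (k : nat) := {p : 'I_k * 'I_k | (p.1 < p.2)%N}.

Definition tensor3 (F : Type) (A B C : finType) := A -> B -> C -> F.

Definition sum_rank_one (F : comPzRingType) (A B C : finType) (r : nat)
  (a : 'I_r -> A -> F) (b : 'I_r -> B -> F) (c : 'I_r -> C -> F)
  : tensor3 F A B C :=
  fun x y z => \sum_(l < r) a l x * b l y * c l z.

Definition is_sum_rank_one (F : comPzRingType) (A B C : finType) (r : nat)
  (S : tensor3 F A B C) : Prop :=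
  exists a b c, forall x y z, S x y z = @sum_rank_one F A B C r a b c x y z.

(* Border rank <= r over C = R[i] (Euclidean topology): T is the limit of a
   sequence of sums of r rank-one tensors (coordinatewise convergence, which
   is convergence in the finite-dimensional tensor space). *)
Definition border_rank_le (R : realType) (A B C : finType)
  (T : tensor3 R[i] A B C) (r : nat) : Prop :=
  exists S : nat -> tensor3 R[i] A B C,
    (forall n, is_sum_rank_one r (S n)) /\
    (forall eps : R[i], 0 < eps -> exists N : nat, forall n, (N <= n)%N ->
       forall x y z, `|T x y z - S n x y z| < eps).

(* T_k = sum_{i<j} (alpha_i (x) alpha_j - alpha_j (x) alpha_i) (x) (e_i /\ e_j)
   in coordinates w.r.t. alpha (x) alpha (x) (e_p /\ e_q)_{p<q}. *)
Definition Tk (R : realType) (k : nat) : tensor3 R[i] 'I_k 'I_k (wedge2_idx k) :=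
  fun i j s =>
    ((i == (val s).1) && (j == (val s).2))%:R
    - ((i == (val s).2) && (j == (val s).1))%:R.

(* Write A = B = V^* and C = Lambda^2 V, so that T_k lies in A (x) B (x) C.  The
   Koszul flattening T^{/\1}_A : A (x) C^* -> Lambda^2 A (x) B is a square
   matrix of size k * 'C(k, 2).  For a rank-one tensor a (x) b (x) c it is
   e_i (x) g |-> g(c) (a /\ e_i) (x) b, of rank at most k - 1 because a /\ a = 0;
   by subadditivity, sums of r rank-one tensors give rank at most r (k - 1).
   For T_k the flattening L satisfies L^2 + L = 2, so it is invertible; as the
   flattening is continuous and invertibility is an open condition, every
   close enough approximant also has full rank k * 'C(k, 2).  Hence
   r (k - 1) >= k * 'C(k, 2) = k^2 (k - 1) / 2. *)

From HB Require Import structures.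
From mathcomp Require Import all_boot all_order all_algebra.
From mathcomp Require Import reals complex.
From mathcomp Require Import zify ring.
Set Implicit Arguments. Unset Strict Implicit. Unset Printing Implicit Defensive.
Import Order.TTheory GRing.Theory Num.Theory.
Local Open Scope ring_scope.

Lemma sum_delta (F : pzSemiRingType) (I : finType) (a : I) (f : I -> F) :
  \sum_i (i == a)%:R * f i = f a.
Proof.
rewrite (bigD1 a) //= eqxx mul1r big1 ?addr0 // => i /negPf->.
by rewrite mul0r.
Qed.

Lemma mxrank_sum_leq (F : fieldType) m n (I : Type) (r : seq I) (P : pred I)
    (A : I -> 'M[F]_(m, n)) :
  (\rank (\sum_(i <- r | P i) A i)%R <= \sum_(i <- r | P i) \rank (A i))%N.
Proof.
apply: (big_ind2 (fun M d => \rank M <= d)%N); first by rewrite mxrank0.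
  by move=> M1 d1 M2 d2 le1 le2; apply: leq_trans (mxrank_add _ _) (leq_add _ _).
by [].
Qed.

Section FunMatrix.
Variables (F : pzSemiRingType) (X : finType).

Definition fun_mx (f : X -> X -> F) : 'M[F]_#|X| :=
  \matrix_(a, b) f (enum_val a) (enum_val b).

Lemma mul_fun_mx f g :
  fun_mx f *m fun_mx g = fun_mx (fun x z => \sum_y f x y * g y z).
Proof.
apply/matrixP => a b; rewrite !mxE (big_enum_val (fun y => f _ y * g y _)).
by apply: eq_bigr => c _; rewrite !mxE.
Qed.

End FunMatrix.

Section NearIdentity.
Variable F : numFieldType.

Lemma row_free_1_sub n (A : 'M[F]_n) :
  (forall i, \sum_j `|A i j| < 1) -> row_free (1%:M - A).
Proof.
move=> rowA; apply: inj_row_free => u.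
rewrite mulmxBr mulmx1 => /eqP; rewrite subr_eq0 => /eqP uA.
have ul1 : \sum_i `|u 0 i| * (1 - \sum_j `|A i j|) <= 0.
  rewrite (eq_bigr (fun i => `|u 0 i| - `|u 0 i| * \sum_j `|A i j|)); last first.
    by move=> i _; rewrite mulrBr mulr1.
  rewrite sumrB subr_le0 {1}uA.
  under eq_bigr do rewrite mxE.
  apply: le_trans (ler_sum _ (fun j _ => ler_norm_sum _ _ _)) _.
  rewrite exchange_big /=; apply: ler_sum => i _; rewrite mulr_sumr.
  by apply: ler_sum => j _; rewrite normrM.
have term_ge0 i : 0 <= `|u 0 i| * (1 - \sum_j `|A i j|).
  by rewrite mulr_ge0 // subr_ge0 ltW.
apply/rowP => i; rewrite mxE; apply/normr0_eq0/eqP.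
have /(psumr_eq0P (fun i _ => term_ge0 i))/(_ i isT)/eqP :
    \sum_i `|u 0 i| * (1 - \sum_j `|A i j|) = 0.
  by apply/eqP; rewrite eq_le ul1 sumr_ge0.
by rewrite mulf_eq0 subr_eq0 (gt_eqF (rowA i)) orbF.
Qed.

Lemma row_free_near n (A B : 'M[F]_n) : B *m A = 1%:M ->
  exists2 d : F, 0 < d &
    forall M : 'M_n, (forall i j, `|A i j - M i j| < d) -> row_free M.
Proof.
move=> BA; set c := \sum_i \sum_j `|B i j|.
have c_ge0 : 0 <= c by rewrite sumr_ge0 // => i _; rewrite sumr_ge0.
have ncd_gt0 : 0 < n%:R * c + 1 by rewrite ltr_wpDl ?mulr_ge0.
exists (n%:R * c + 1)^-1 => [|M near_AM]; first by rewrite invr_gt0.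
have rowB i : \sum_j `|B i j| <= c.
  by rewrite /c [leRHS](bigD1 i) //= lerDl sumr_ge0 // => l _; rewrite sumr_ge0.
suff : row_free (B *m M).
  by rewrite -!row_leq_rank => /leq_trans; apply; apply: mxrankM_maxr.
have -> : B *m M = 1%:M - B *m (A - M) by rewrite mulmxBr BA subKr.
apply: row_free_1_sub => i.
apply: le_lt_trans (_ : \sum_(j < n) c * (n%:R * c + 1)^-1 < 1).
  apply: ler_sum => j _; rewrite mxE; apply: le_trans (ler_norm_sum _ _ _) _.
  apply: le_trans (_ : \sum_l `|B i l| * (n%:R * c + 1)^-1 <= _).
    apply: ler_sum => l _; rewrite normrM ler_wpM2l // !mxE ltW //.
  by rewrite -mulr_suml; apply: ler_wpM2r (rowB i); rewrite invr_ge0 ltW.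
rewrite sumr_const card_ord -[_ *+ n]mulr_natl mulrA ltr_pdivrMr // mul1r.
by rewrite ltrDl.
Qed.

End NearIdentity.

Section Wedge.
Variables (F : comPzRingType) (k : nat).
Implicit Types (s P Q : wedge2_idx k) (t u v a b i j m : 'I_k).

(* The coordinate of e_u /\ e_v along the basis vector e_s of Lambda^2 V. *)
Definition wedge_coord s u v : F :=
  ((u == (val s).1) && (v == (val s).2))%:R
  - ((u == (val s).2) && (v == (val s).1))%:R.

Lemma wedge_coordN s u v : wedge_coord s u v = - wedge_coord s v u.
Proof.
by rewrite /wedge_coord opprB [(v == _) && _]andbC [(v == _) && _]andbC.
Qed.

Lemma wedge_coord_basis s P : wedge_coord s (val P).1 (val P).2 = (s == P)%:R.
Proof.
case: s P => [[s1 s2] lt_s] [[p1 p2] lt_p]; rewrite /wedge_coord /=.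
have -> : (p1 == s2) && (p2 == s1) = false.
  by apply/andP => -[/eqP eq1 /eqP eq2]; move: lt_s lt_p; rewrite eq1 eq2 /=; lia.
rewrite subr0; congr (nat_of_bool _)%:R.
apply/idP/idP => [/andP[/eqP eq1 /eqP eq2] | /eqP/(congr1 val) [-> ->]].
  by apply/eqP/val_inj; rewrite /= eq1 eq2.
by rewrite !eqxx.
Qed.

Lemma sum_wedge_coordl s v (f : 'I_k -> F) :
  \sum_t wedge_coord s t v * f t
  = f (val s).1 * (v == (val s).2)%:R - f (val s).2 * (v == (val s).1)%:R.
Proof.
rewrite -(sum_delta (val s).1 f) -(sum_delta (val s).2 f) !mulr_suml -sumrB.
by apply: eq_bigr => t _; rewrite /wedge_coord -!mulnb !natrM; ring.
Qed.

Lemma sum_wedge_coord_mul u v a b :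
  \sum_s wedge_coord s u v * wedge_coord s a b
  = (u == a)%:R * (v == b)%:R - (u == b)%:R * (v == a)%:R.
Proof.
wlog le_uv : u v / (u <= v)%N.
  move=> le_case; case: (leqP u v) => [/le_case // | /ltnW/le_case].
  under eq_bigr do rewrite wedge_coordN mulNr.
  by rewrite sumrN => /(canRL (@opprK _)) ->; ring.
case: (ltngtP u v) le_uv => // [lt_uv _ | /val_inj <- _].
  pose s0 : wedge2_idx k := exist _ (u, v) lt_uv.
  under eq_bigr do rewrite (wedge_coord_basis _ s0).
  rewrite sum_delta /wedge_coord -!mulnb !natrM /=.
  by rewrite ![_ == a]eq_sym ![_ == b]eq_sym; ring.
rewrite big1 => [|s _]; first by rewrite mulrC subrr.
by rewrite /wedge_coord andbC subrr mul0r.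
Qed.

(* Over [R[i]] this is [Tk R k] up to conversion. *)
Definition wedge_tensor : tensor3 F 'I_k 'I_k (wedge2_idx k) :=
  fun t m s => wedge_coord s t m.

(* T^{/\1}_A : e_i (x) g_s |-> sum_(t, m) T t m s (e_t /\ e_i) (x) e_m, with
   rows indexed by (P, m) in Lambda^2 A (x) B and columns by (s, i). *)
Definition koszul_flattening (T : tensor3 F 'I_k 'I_k (wedge2_idx k))
    (x y : wedge2_idx k * 'I_k) : F :=
  \sum_t wedge_coord x.1 t y.2 * T t x.2 y.1.

Lemma koszul_wedgeE P m s i :
  koszul_flattening wedge_tensor (P, m) (s, i)
  = wedge_coord s (val P).1 m * (i == (val P).2)%:R
    - wedge_coord s (val P).2 m * (i == (val P).1)%:R.
Proof. exact: sum_wedge_coordl. Qed.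

(* By GL(V)-equivariance, the flattening of [wedge_tensor] acts by -2 on
   Lambda^3 V and by 1 on its complement S_(2,1) V in Lambda^2 V (x) V. *)
Lemma koszul_wedge_sqr x z :
  \sum_y koszul_flattening wedge_tensor x y * koszul_flattening wedge_tensor y z
  = 2 * (x == z)%:R - koszul_flattening wedge_tensor x z.
Proof.
case: x z => [P m] [Q j]; set L := koszul_flattening wedge_tensor.
set p1 := (val P).1; set p2 := (val P).2.
transitivity (\sum_s (wedge_coord s p1 m * L (s, p2) (Q, j)
                     - wedge_coord s p2 m * L (s, p1) (Q, j))).
  rewrite (eq_bigr (fun y => L (P, m) (y.1, y.2) * L (y.1, y.2) (Q, j))).
    rewrite -(pair_bigA _ (fun s i => L (P, m) (s, i) * L (s, i) (Q, j))).
    apply: eq_bigr => s _; under eq_bigr do rewrite {1}/L koszul_wedgeE.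
    rewrite -(sum_delta p2 (fun i => L (s, i) (Q, j))).
    rewrite -(sum_delta p1 (fun i => L (s, i) (Q, j))) !mulr_sumr -sumrB.
    by apply: eq_bigr => i _; ring.
  by case.
transitivity (\sum_u
    ((\sum_s wedge_coord s p1 m * wedge_coord s u j) * wedge_coord Q u p2
     - (\sum_s wedge_coord s p2 m * wedge_coord s u j) * wedge_coord Q u p1)).
  rewrite /L /koszul_flattening /wedge_tensor /=.
  under eq_bigr do rewrite !mulr_sumr -sumrB.
  rewrite exchange_big; apply: eq_bigr => u _; rewrite !mulr_suml -sumrB.
  by apply: eq_bigr => s _; ring.
under eq_bigr do rewrite !sum_wedge_coord_mul.
transitivity
  ((m == j)%:R * wedge_coord Q p1 p2 - (p1 == j)%:R * wedge_coord Q m p2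
   - ((m == j)%:R * wedge_coord Q p2 p1 - (p2 == j)%:R * wedge_coord Q m p1)).
  rewrite -(sum_delta p1 (fun u => wedge_coord Q u p2)).
  rewrite -(sum_delta m (fun u => wedge_coord Q u p2)).
  rewrite -(sum_delta p2 (fun u => wedge_coord Q u p1)).
  rewrite -(sum_delta m (fun u => wedge_coord Q u p1)).
  rewrite !mulr_sumr -!sumrB; apply: eq_bigr => u _.
  by rewrite ![_ == u]eq_sym; ring.
rewrite /L koszul_wedgeE (wedge_coordN Q p2 p1) (wedge_coordN Q m p2).
rewrite (wedge_coordN Q m p1) wedge_coord_basis xpair_eqE -mulnb natrM.
by rewrite ![j == _]eq_sym [Q == P]eq_sym; ring.
Qed.

Lemma koszul_wedge_quadratic (L := fun_mx (koszul_flattening wedge_tensor)) :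
  (L + 1%:M) *m L = 2%:M.
Proof.
apply/matrixP => a b; rewrite mulmxDl mul1mx mul_fun_mx !mxE koszul_wedge_sqr.
by rewrite (inj_eq enum_val_inj) mulr_natr subrK.
Qed.

End Wedge.

Arguments wedge_coord {F k}.
Arguments wedge_tensor {F k}.

Section KoszulRank.
Variables (F : fieldType) (k : nat).

Lemma koszul_rank_one (a b : 'I_k -> F) (c : wedge2_idx k -> F) :
  let L := fun_mx (koszul_flattening (fun t m s => a t * b m * c s)) in
  (\rank L <= k.-1)%N.
Proof.
set A1 : 'M[F]_(#|{: wedge2_idx k * 'I_k}|, k) := \matrix_(x, i)
  ((\sum_t wedge_coord (enum_val x).1 t i * a t) * b (enum_val x).2).
set B1 : 'M[F]_(k, #|{: wedge2_idx k * 'I_k}|) :=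
  \matrix_(i, y) ((i == (enum_val y).2)%:R * c (enum_val y).1).
have -> : fun_mx (koszul_flattening (fun t m s => a t * b m * c s)) = A1 *m B1.
  apply/matrixP => x y; rewrite !mxE (bigD1 (enum_val y).2) //=.
  rewrite big1 => [|i /negPf ne_i].
    rewrite !mxE eqxx mul1r addr0 !mulr_suml.
    by apply: eq_bigr => t _; ring.
  by rewrite !mxE ne_i mul0r mulr0.
apply: leq_trans (mxrankM_maxl _ _) _.
have A1_a : A1 *m (\col_i a i) = 0.
  apply/colP => x; rewrite !mxE.
  under eq_bigr do rewrite !mxE sum_wedge_coordl.
  set p1 := (val (enum_val x).1).1; set p2 := (val (enum_val x).1).2.
  set bx := b (enum_val x).2.
  rewrite -[LHS]/(\sum_i (_ - _) * bx * a i).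
  transitivity (\sum_i (i == p2)%:R * (a p1 * bx * a i)
                - \sum_i (i == p1)%:R * (a p2 * bx * a i)).
    by rewrite -sumrB; apply: eq_bigr => i _; ring.
  by rewrite !sum_delta; ring.
have [a0 | a_neq0] := eqVneq (\col_i a i) 0.
  suff -> : A1 = 0 by rewrite mxrank0.
  apply/matrixP => x i; rewrite !mxE big1 ?mul0r // => t _.
  by move/colP/(_ t): a0; rewrite !mxE => ->; rewrite mulr0.
have := mulmx0_rank_max A1_a.
rewrite -(mxrank_tr (\col_i a i)) rank_rV trmx_eq0 a_neq0 /=.
by rewrite addn1 => /leq_trans/(_ (leqSpred k)).
Qed.

Lemma koszul_rank_le r (S : tensor3 F 'I_k 'I_k (wedge2_idx k)) :
  is_sum_rank_one r S -> (\rank (fun_mx (koszul_flattening S)) <= r * k.-1)%N.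
Proof.
move=> [a [b [c defS]]].
have -> : fun_mx (koszul_flattening S)
    = \sum_(l < r)
        fun_mx (koszul_flattening (fun t m s => a l t * b l m * c l s)).
  apply/matrixP => x y; rewrite summxE mxE; under [RHS]eq_bigr do rewrite mxE.
  rewrite /koszul_flattening; under [LHS]eq_bigr do rewrite defS mulr_sumr.
  by rewrite exchange_big.
apply: leq_trans (mxrank_sum_leq _ _ _) _.
apply: leq_trans (_ : (\sum_(l < r) k.-1 <= _)%N).
  by apply: leq_sum => l _; apply: koszul_rank_one.
by rewrite sum_nat_const card_ord.
Qed.

End KoszulRank.

Section KoszulNear.
Variables (F : numFieldType) (k : nat).

Lemma norm_wedge_coord_le1 (s : wedge2_idx k) u v : `|wedge_coord s u v : F| <= 1.
Proof.
case: s => [[s1 s2] /= lt_s]; rewrite /wedge_coord /=.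
have [-> | ne_u1] := eqVneq u s1; last first.
  by rewrite /= sub0r normrN; case: (_ && _); rewrite ?normr1 ?normr0.
have -> : (s1 == s2) = false by apply/negbTE; rewrite -val_eqE /= neq_ltn lt_s.
by rewrite /= subr0; case: (_ == _); rewrite ?normr1 ?normr0.
Qed.

Lemma koszul_flattening_near (T : tensor3 F 'I_k 'I_k (wedge2_idx k)) (d : F) :
  0 < d -> exists2 e : F, 0 < e &
    forall S, (forall t m s, `|T t m s - S t m s| < e) ->
    forall x y, `|koszul_flattening T x y - koszul_flattening S x y| < d.
Proof.
move=> d_gt0; exists (d / k.+1%:R) => [|S near_TS x y]; first by rewrite divr_gt0.
rewrite /koszul_flattening -sumrB.
apply: le_lt_trans (ler_norm_sum _ _ _) _.
apply: le_lt_trans (_ : \sum_(t < k) d / k.+1%:R < d).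
  apply: ler_sum => t _; rewrite -mulrBr normrM -[leRHS]mul1r.
  by apply: ler_pM; rewrite ?normr_ge0 ?norm_wedge_coord_le1 ?ltW ?near_TS.
rewrite sumr_const card_ord -[_ *+ k]mulr_natl mulrCA gtr_pMr //.
by rewrite ltr_pdivrMr // mul1r ltr_nat.
Qed.

Lemma koszul_wedge_inverse (L := fun_mx (koszul_flattening (@wedge_tensor F k))) :
  (2^-1 *: (L + 1%:M)) *m L = 1%:M.
Proof.
by rewrite -scalemxAl koszul_wedge_quadratic scale_scalar_mx mulVf ?pnatr_eq0.
Qed.

End KoszulNear.

Lemma card_wedge2_idx k : #|{: wedge2_idx k}| = 'C(k, 2).
Proof.
rewrite card_sig -sum1_card -bin2_sum big_mkord.
transitivity (\sum_(u < k) \sum_(v < k | (u < v)%N) 1)%N.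
  by rewrite pair_big_dep /=; apply: eq_bigl => -[u v].
rewrite (exchange_big_dep xpredT) //=; apply: eq_bigr => v _.
by rewrite -(big_ord_widen _ (fun=> 1%N) (ltnW (ltn_ord v))) sum1_card card_ord.
Qed.

Theorem corollary1 (R : realType) (k : nat) (hk : (2 <= k)%N) :
  forall r : nat, border_rank_le (@Tk R k) r -> (uphalf (k ^ 2) <= r)%N.
Proof.
move=> r [S [S_rank S_lim]].
have [d d_gt0 near_free] := row_free_near (koszul_wedge_inverse R[i] k).
have [e e_gt0 near_koszul] := koszul_flattening_near (@Tk R k) d_gt0.
have [n0 /(_ n0 (leqnn n0)) near_n0] := S_lim e e_gt0.
have free : row_free (fun_mx (koszul_flattening (S n0))).
  by apply: near_free => x y; rewrite !mxE; apply: near_koszul.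
move: free; rewrite -row_leq_rank => /leq_trans/(_ (koszul_rank_le (S_rank n0))).
rewrite card_prod card_wedge2_idx card_ord leq_uphalf_double => le_rank.
have bin2_double : ('C(k, 2) * 2 = k * k.-1)%N.
  by rewrite mulnC -mul_bin_diag bin1.
nia.
Qed.
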